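(* Let $s_1 \geq s_2 \geq \dots \geq s_n$ be the side lengths of a sequence of squares with $s_1 \leq 0.295$. Consider the following packing procedure in the unit disk $\mathcal{D}$: an axis-parallel square container $\mathcal{X}$ of side length $1.388$ is placed concentric with $\mathcal{D}$, and four square containers $\mathcal{X}_1,\dots,\mathcal{X}_4$ of side length $0.295$ are placed inside $\mathcal{D}$, one adjacent to each side of $\mathcal{X}$ (outside $\mathcal{X}$); the square $s_i$ is placed into $\mathcal{X}_i$ for $i = 1,\dots,4$, and the squares $s_5,\dots,s_n$ are packed into $\mathcal{X}$ using \textsc{Shelf Packing}. If this procedure fails to pack the sequence, then $\sum_{i=1}^n s_i^2 > \frac{8}{5}$.
   Context: $\mathcal{D}$ denotes the disk of radius $1$. \textsc{Shelf Packing} into an axis-parallel square container processes the squares in order of non-increasing side length and places them axis-parallel in horizontal shelves stacked from the bottom upward: the first square of a shelf determines its height, subsequent squares are placed next to each other along the shelf's bottom from left to right, and when the next square does not fit into the remaining width of the current shelf, a new shelf is opened on top of the current one starting with that square. It fails if some square would have to be placed in a shelf exceeding the container's height. The procedure fails to pack the sequence if \textsc{Shelf Packing} fails to pack $s_5,\dots,s_n$ into $\mathcal{X}$. *)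

From Stdlib Require Import Reals Lra List Sorted.
Open Scope R_scope.

(* State of the current (open) shelf: y = bottom coordinate of the shelf,
   h = its height (side of its first square), w = width already used. *)
Fixpoint shelf_pack_from (L y h w : R) (s : list R) : bool :=
  match s with
  | nil => true
  | a :: t =>
      if Rle_dec (w + a) L then shelf_pack_from L y h (w + a) t
      else if Rle_dec (y + h + a) L then shelf_pack_from L (y + h) a a t
      else false
  end.

Definition shelf_packs (L : R) (s : list R) : bool :=
  match s with
  | nil => true
  | a :: t => if Rle_dec a L then shelf_pack_from L 0 a a t else false
  end.

Definition sum_sq (s : list R) : R := fold_right (fun x acc => x ^ 2 + acc) 0 s.

(** If Shelf Packing of the squares [a >= ...] into a square container of
    side [L] fails, then every closed shelf, together with the first square
    [b] of the next shelf (or the square that overflows), covers an area of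
    at least [b * (L - a)]: its squares other than the first are at least [b]
    and fill, together with [b], more than [L] minus the shelf height.  As the
    heights of these [b] exceed [L - a] in total, the squares after [a] have
    area at least [(L - a)^2].  The four squares put into the side containers
    are at least [a], so the total area is at least
    [5 a^2 + (L - a)^2 >= 5 L^2 / 6], which exceeds [8/5] for [L = 1.388]. *)

From Stdlib Require Import Reals List Sorted Lra Psatz.
Import ListNotations.
Open Scope R_scope.

Lemma StronglySorted_app_r {A : Type} (R : A -> A -> Prop) (l1 l2 : list A) :
  StronglySorted R (l1 ++ l2) -> StronglySorted R l2.
Proof.
  induction l1 as [|x l1 IH]; simpl; intros Hsorted; [exact Hsorted|].
  apply IH, (StronglySorted_inv Hsorted).
Qed.

Lemma StronglySorted_app_Forall_l {A : Type} (R : A -> A -> Prop)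
    (l1 : list A) (a : A) (l2 : list A) :
  StronglySorted R (l1 ++ a :: l2) -> Forall (fun x => R x a) l1.
Proof.
  induction l1 as [|x l1 IH]; simpl; intros Hsorted; [constructor|].
  apply StronglySorted_inv in Hsorted as [Hsorted Hx].
  apply Forall_app in Hx as [_ Hx].
  constructor; [exact (Forall_inv Hx) | exact (IH Hsorted)].
Qed.

Lemma sum_sq_cons (a : R) (l : list R) : sum_sq (a :: l) = a ^ 2 + sum_sq l.
Proof. reflexivity. Qed.

Lemma sum_sq_app (l1 l2 : list R) : sum_sq (l1 ++ l2) = sum_sq l1 + sum_sq l2.
Proof.
  induction l1 as [|x l1 IH]; simpl app; [simpl; ring|].
  rewrite !sum_sq_cons, IH; ring.
Qed.

Lemma sum_sq_ge0 (l : list R) : 0 <= sum_sq l.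
Proof.
  induction l as [|x l IH]; [simpl; lra|].
  rewrite sum_sq_cons; pose proof (pow2_ge_0 x); lra.
Qed.

Lemma sum_sq_ge_length_mul (a : R) (l : list R) :
  0 <= a -> Forall (fun x => x >= a) l -> INR (length l) * a ^ 2 <= sum_sq l.
Proof.
  intros Ha; induction l as [|x l IH]; intros Hl; [simpl; lra|].
  apply Forall_cons_iff in Hl as [Hx Hl].
  rewrite sum_sq_cons; cbn [length]; rewrite S_INR.
  specialize (IH Hl); nra.
Qed.

(* Area argument for closing the current shelf of height [h] and width [w]
   because the next square [a], bounded by the last placed square [m], does
   not fit: the squares of the shelf after the first have total width
   [w - h > L - a - h] and side at least [a]. *)
Lemma closing_shelf_area (L H h w m a : R) :
  h <= H -> h <= w -> 0 <= a -> a <= m -> L < w + a ->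
  a * (L - H) <= a ^ 2 + m * (w - h).
Proof. intros; nra. Qed.

(* The term [- m * (w - h)] credits the area of the squares already placed
   in the current shelf after its first square, all of side at least [m]. *)
Lemma shelf_pack_from_false_sum_sq (L H : R) (t : list R) :
  forall y h w m,
  H <= L -> h <= H -> h <= w -> m <= H ->
  Sorted Rge (m :: t) -> Forall (Rle 0) t ->
  shelf_pack_from L y h w t = false ->
  (L - H) * (L - y - h) - m * (w - h) <= sum_sq t.
Proof.
  induction t as [|a t IH];
    intros y h w m HL Hh Hhw Hm Hsorted Hnonneg Hfail; [discriminate Hfail|].
  apply Sorted_inv in Hsorted as [Hsorted Hma]; apply HdRel_inv in Hma.
  apply Forall_cons_iff in Hnonneg as [Ha Hnonneg].
  rewrite sum_sq_cons; simpl in Hfail.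
  destruct (Rle_dec (w + a) L) as [Hfit|Hnofit].
  - specialize (IH y h (w + a) a ltac:(lra) Hh ltac:(lra) ltac:(lra)
                   Hsorted Hnonneg Hfail).
    nra.
  - pose proof (closing_shelf_area L H h w m a Hh Hhw Ha ltac:(lra) ltac:(lra)).
    destruct (Rle_dec (y + h + a) L) as [Hshelf|Hoverflow].
    + specialize (IH (y + h) a a a HL ltac:(lra) ltac:(lra) ltac:(lra)
                     Hsorted Hnonneg Hfail).
      nra.
    + pose proof (sum_sq_ge0 t); nra.
Qed.

Lemma shelf_packs_false_sum_sq (L a : R) (t : list R) :
  a <= L -> Sorted Rge (a :: t) -> Forall (Rle 0) t ->
  shelf_packs L (a :: t) = false -> (L - a) ^ 2 <= sum_sq t.
Proof.
  intros HaL Hsorted Hnonneg Hfail; simpl in Hfail.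
  destruct (Rle_dec a L) as [_|]; [|contradiction].
  pose proof (shelf_pack_from_false_sum_sq L a t 0 a a a HaL ltac:(lra)
                ltac:(lra) ltac:(lra) Hsorted Hnonneg Hfail).
  nra.
Qed.

Theorem lemma15 (s : list R) :
  Forall (fun x => 0 < x) s ->
  Sorted Rge s ->
  (forall a, hd_error s = Some a -> a <= 295 / 1000) ->
  (* the procedure fails: Shelf Packing fails to pack s_5,...,s_n into X *)
  shelf_packs (1388 / 1000) (skipn 4 s) = false ->
  sum_sq s > 8 / 5.
Proof.
  intros Hpos Hsorted Hhead Hfail.
  destruct s as [|s1 [|s2 [|s3 [|s4 [|a t]]]]]; try discriminate Hfail.
  cbn [skipn] in Hfail.
  change (s1 :: s2 :: s3 :: s4 :: a :: t) with ([s1; s2; s3; s4] ++ a :: t) in *.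
  apply Sorted_StronglySorted in Hsorted; [|intros x y z; lra].
  pose proof (StronglySorted_app_Forall_l _ _ _ _ Hsorted) as Hfirst.
  pose proof (StronglySorted_Sorted (StronglySorted_app_r _ _ _ Hsorted)) as Hrest.
  apply Forall_app in Hpos as [_ Hpos].
  apply Forall_cons_iff in Hpos as [Ha Hpos].
  assert (HaL : a <= 1388 / 1000).
  { pose proof (Forall_inv Hfirst); specialize (Hhead s1 eq_refl); lra. }
  pose proof (shelf_packs_false_sum_sq _ _ _ HaL Hrest
                (Forall_impl _ (fun x => Rlt_le 0 x) Hpos) Hfail) as Hshelves.
  pose proof (sum_sq_ge_length_mul a _ ltac:(lra) Hfirst) as Hcontainers.
  rewrite sum_sq_app, (sum_sq_cons a t).
  cbn [length] in Hcontainers; replace (INR 4) with 4 in Hcontainers by (simpl; ring).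
  (* [5 a^2 + (L - a)^2 - 5 L^2 / 6 = (6 a - L)^2 / 6] *)
  pose proof (pow2_ge_0 (6 * a - 1388 / 1000)).
  nra.
Qed.
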